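(* CR is sound: for every set of first-order clauses $S$ and clause $c$, if there is a CR proof of $c$ from $S$ (a CR derivation of $c$ from $S$ in which all decision literals are discharged), then $c$ is a logical consequence of $S$ (with clause variables read as universally quantified). In particular, if $S$ has a CR refutation then $S$ is unsatisfiable.
   Context: Clauses are first-order disjunctions of literals with variables implicitly universally quantified; $\bar{\ell}$ denotes the dual of literal $\ell$; $\bot$ is the empty clause. Rules operate modulo associativity/commutativity of disjunction, involutive negation and $\Gamma\vee\bot=\Gamma$, with variables renamed apart. A CR derivation of $c$ from $S$ is a DAG of clauses whose leaves are clauses of $S$ or (unit) decision literals $[\ell]$ (arbitrary literals assumed as hypotheses), whose sink is $c$, and whose internal nodes are obtained by: (Unit-propagating resolution) from unit clauses $\ell_1,\ldots,\ell_n$ and $\bar{\ell'_1}\vee\ldots\vee\bar{\ell'_n}\vee\ell$ infer $\ell\sigma$, where $\sigma$ unifies $\ell_k,\ell'_k$ for all $k$; (Conflict) from $\ell$ and $\bar{\ell'}$ infer $\bot$, where $\sigma$ unifies $\ell,\ell'$; (Conflict-driven clause learning) from a derivation of $\bot$ using decision literals $[\ell_1],\ldots,[\ell_n]$ infer $(\bar{\ell_1}\sigma^1_1\vee\ldots\vee\bar{\ell_1}\sigma^1_{m_1})\vee\ldots\vee(\bar{\ell_n}\sigma^n_1\vee\ldots\vee\bar{\ell_n}\sigma^n_{m_n})$, discharging them, where $\sigma^k_j$ is the composition of the substitutions used on the $j$-th path from $\ell_k$ to $\bot$. A CR refutation is a CR proof of $\bot$. *)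

From Stdlib Require Import List Permutation Arith.
Import ListNotations.

(* Terms: variables are indexed by nat, function symbols by nat; a function
   symbol is applied to a list of arguments (arities are implicit). *)
Inductive term : Type :=
| Var : nat -> term
| Fn  : nat -> list term -> term.

(* A literal: polarity (true = positive), predicate symbol, arguments. *)
Inductive literal : Type :=
| Lit : bool -> nat -> list term -> literal.

(* A clause is a disjunction of literals; the empty list is the empty
   clause (bottom).  Rules work modulo AC of disjunction (Permutation). *)
Definition clause := list literal.

Definition dual (l : literal) : literal :=
  match l with Lit b p ts => Lit (negb b) p ts end.

Definition subst := nat -> term.

Fixpoint subst_term (s : subst) (t : term) : term :=
  match t with
  | Var x => s x
  | Fn f ts => Fn f (map (subst_term s) ts)
  end.

Definition subst_lit (s : subst) (l : literal) : literal :=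
  match l with Lit b p ts => Lit b p (map (subst_term s) ts) end.

Definition ren (r : nat -> nat) : subst := fun x => Var (r x).

(* A premise literal is first renamed by [r] (renaming apart), then the
   unifier [s] is applied: this is the substitution carried along the edge
   from that premise to the conclusion. *)
Definition inst (s : subst) (r : nat -> nat) (l : literal) : literal :=
  subst_lit s (subst_lit (ren r) l).

Fixpoint occurs (x : nat) (t : term) : bool :=
  match t with
  | Var y => Nat.eqb x y
  | Fn _ ts => existsb (occurs x) ts
  end.

Definition lit_occurs (x : nat) (l : literal) : bool :=
  match l with Lit _ _ ts => existsb (occurs x) ts end.

Definition clause_vars (c : clause) (x : nat) : Prop :=
  exists l, In l c /\ lit_occurs x l = true.

Definition injective_ren (r : nat -> nat) : Prop :=
  forall x y, r x = r y -> x = y.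

Definition disjoint_vars (c1 c2 : clause) : Prop :=
  forall x, clause_vars c1 x -> clause_vars c2 x -> False.

Definition opt_lit (o : option literal) : clause :=
  match o with Some l => [l] | None => [] end.

(** [CRder S c O] : there is a CR derivation (a DAG, represented by its tree
   unfolding) with sink [c], whose leaves are clauses of [S] or decision
   literals, and [O] is the list of the instances [l theta] of the
   still-undischarged decision literals [[l]], one entry per path from such a
   decision leaf to the sink, [theta] being the composition of the
   substitutions used along that path. *)
Inductive CRder (S : clause -> Prop) : clause -> list literal -> Prop :=
| CR_input (c : clause) :
    S c -> CRder S c []
| CR_decision (l : literal) :
    CRder S [l] [l]
(* Unit-propagating resolution: from unit clauses u_0..u_{n-1} and the
   clause ~l'_0 \/ ... \/ ~l'_{n-1} \/ l (where, by Gamma \/ bot = Gamma,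
   l may be absent), all renamed apart, infer l sigma where sigma unifies
   u_k and l'_k for every k. *)
| CR_unitprop (n : nat) (u l' : nat -> literal) (O : nat -> list literal)
    (r : nat -> nat -> nat) (C0 : clause) (O0 : list literal)
    (r0 : nat -> nat) (hd : option literal) (sigma : subst) :
    (forall k, k < n -> CRder S [u k] (O k)) ->
    CRder S C0 O0 ->
    Permutation C0 (map dual (map l' (seq 0 n)) ++ opt_lit hd) ->
    injective_ren r0 ->
    (forall k, k < n -> injective_ren (r k)) ->
    (forall k, k < n ->
       disjoint_vars [subst_lit (ren (r k)) (u k)] (map (subst_lit (ren r0)) C0)) ->
    (forall k j, k < n -> j < n -> k <> j ->
       disjoint_vars [subst_lit (ren (r k)) (u k)] [subst_lit (ren (r j)) (u j)]) ->
    (forall k, k < n -> inst sigma (r k) (u k) = inst sigma r0 (l' k)) ->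
    CRder S (map (inst sigma r0) (opt_lit hd))
            (map (inst sigma r0) O0 ++
             flat_map (fun k => map (inst sigma (r k)) (O k)) (seq 0 n))
| CR_conflict (l1 l2 : literal) (O1 O2 : list literal) (r1 r2 : nat -> nat)
    (sigma : subst) :
    CRder S [l1] O1 ->
    CRder S [dual l2] O2 ->
    injective_ren r1 -> injective_ren r2 ->
    disjoint_vars [subst_lit (ren r1) l1] [subst_lit (ren r2) (dual l2)] ->
    inst sigma r1 l1 = inst sigma r2 l2 ->
    CRder S [] (map (inst sigma r1) O1 ++ map (inst sigma r2) O2)
(* Conflict-driven clause learning: from a derivation of bot using the
   decision literals (with path instances O), infer the disjunction of
   their negated instances, discharging them. *)
| CR_cdcl (O : list literal) :
    CRder S [] O -> CRder S (map dual O) [].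

Definition CRproof (S : clause -> Prop) (c : clause) : Prop :=
  exists c', CRder S c' [] /\ Permutation c' c.

Definition CRrefutation (S : clause -> Prop) : Prop := CRproof S [].

Record structure : Type := {
  dom : Type;
  dom_inhabited : dom;
  fun_interp : nat -> list dom -> dom;
  pred_interp : nat -> list dom -> Prop
}.

Fixpoint eval (M : structure) (v : nat -> dom M) (t : term) : dom M :=
  match t with
  | Var x => v x
  | Fn f ts => fun_interp M f (map (eval M v) ts)
  end.

Definition lit_true (M : structure) (v : nat -> dom M) (l : literal) : Prop :=
  match l with
  | Lit true p ts => pred_interp M p (map (eval M v) ts)
  | Lit false p ts => ~ pred_interp M p (map (eval M v) ts)
  end.

Definition clause_true (M : structure) (v : nat -> dom M) (c : clause) : Prop :=
  exists l, In l c /\ lit_true M v l.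

Definition clause_valid (M : structure) (c : clause) : Prop :=
  forall v : nat -> dom M, clause_true M v c.

Definition models (M : structure) (S : clause -> Prop) : Prop :=
  forall c, S c -> clause_valid M c.

Definition entails (S : clause -> Prop) (c : clause) : Prop :=
  forall M : structure, models M S -> clause_valid M c.

Definition unsatisfiable (S : clause -> Prop) : Prop :=
  forall M : structure, ~ models M S.

(* Every derivation satisfies the invariant: in a model of S, any valuation
   making all open decision instances true makes the derived clause true.
   Instantiating a premise by a renaming and a unifier is absorbed into a
   change of valuation, so resolution and conflict preserve the invariant,
   and clause learning turns the falsity of bot into the disjunction of the
   negated decision instances.  A proof has no open decisions, so its clause
   holds under every valuation. *)
From Stdlib Require Import List Permutation Arith Classical Lia.
Import ListNotations.

Fixpoint eval_subst_term (M : structure) (v : nat -> dom M) (s : subst) (t : term)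
  {struct t} : eval M v (subst_term s t) = eval M (fun x => eval M v (s x)) t.
Proof.
  destruct t as [x | f ts]; simpl; [reflexivity |].
  f_equal. rewrite map_map.
  induction ts as [| t ts IH]; simpl; [reflexivity |].
  rewrite eval_subst_term, IH. reflexivity.
Qed.

Lemma lit_true_subst_lit M v s l :
  lit_true M v (subst_lit s l) <-> lit_true M (fun x => eval M v (s x)) l.
Proof.
  assert (Hargs : forall ts, map (eval M v) (map (subst_term s) ts)
                             = map (eval M (fun x => eval M v (s x))) ts).
  { intros ts. rewrite map_map. apply map_ext. intros t. apply eval_subst_term. }
  destruct l as [[|] p ts]; simpl; rewrite Hargs; reflexivity.
Qed.

Definition inst_valuation M (v : nat -> dom M) (s : subst) (r : nat -> nat)
  : nat -> dom M :=
  fun x => eval M (fun y => eval M v (s y)) (ren r x).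

Lemma lit_true_inst M v s r l :
  lit_true M v (inst s r l) <-> lit_true M (inst_valuation M v s r) l.
Proof. unfold inst. rewrite !lit_true_subst_lit. reflexivity. Qed.

Lemma lit_true_dual M v l : lit_true M v (dual l) <-> ~ lit_true M v l.
Proof.
  destruct l as [[|] p ts]; simpl; split; try tauto.
Qed.

Definition all_true M (v : nat -> dom M) (O : list literal) : Prop :=
  forall o, In o O -> lit_true M v o.

Lemma all_true_app M v O1 O2 :
  all_true M v (O1 ++ O2) <-> all_true M v O1 /\ all_true M v O2.
Proof.
  unfold all_true. split.
  - intros H. split; intros o Ho; apply H, in_or_app; auto.
  - intros [H1 H2] o Ho. apply in_app_or in Ho as [Ho | Ho]; auto.
Qed.

Lemma all_true_map_inst M v s r O :
  all_true M v (map (inst s r) O) <-> all_true M (inst_valuation M v s r) O.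
Proof.
  unfold all_true. split.
  - intros H o Ho. apply lit_true_inst, H, in_map, Ho.
  - intros H o Ho. apply in_map_iff in Ho as [o' [<- Ho']].
    apply lit_true_inst, H, Ho'.
Qed.

Lemma all_true_flat_map_seq M v n (f : nat -> list literal) :
  all_true M v (flat_map f (seq 0 n)) -> forall k, k < n -> all_true M v (f k).
Proof.
  intros H k Hk o Ho. apply H, in_flat_map.
  exists k. split; [apply in_seq; lia | exact Ho].
Qed.

Definition holds_under_decisions M (c : clause) (O : list literal) : Prop :=
  forall v, all_true M v O -> clause_true M v c.

Lemma holds_under_decisions_unit M l O v :
  holds_under_decisions M [l] O -> all_true M v O -> lit_true M v l.
Proof.
  intros H HO. destruct (H v HO) as [x [[<- | []] Hx]]. exact Hx.
Qed.

Section Rules.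

Variable M : structure.

Lemma unitprop_holds n (u l' : nat -> literal) (O : nat -> list literal)
    (r : nat -> nat -> nat) C0 O0 r0 hd sigma :
  (forall k, k < n -> holds_under_decisions M [u k] (O k)) ->
  holds_under_decisions M C0 O0 ->
  Permutation C0 (map dual (map l' (seq 0 n)) ++ opt_lit hd) ->
  (forall k, k < n -> inst sigma (r k) (u k) = inst sigma r0 (l' k)) ->
  holds_under_decisions M (map (inst sigma r0) (opt_lit hd))
    (map (inst sigma r0) O0 ++
     flat_map (fun k => map (inst sigma (r k)) (O k)) (seq 0 n)).
Proof.
  intros Hu HC0 Hperm Hunif v HO.
  apply all_true_app in HO as [HO0 HOk].
  pose proof (all_true_flat_map_seq _ _ _ _ HOk) as HOk'.
  set (w := inst_valuation M v sigma r0).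
  assert (Hl' : forall k, k < n -> lit_true M w (l' k)).
  { intros k Hk. apply lit_true_inst. rewrite <- Hunif by exact Hk.
    apply lit_true_inst. eapply holds_under_decisions_unit; [exact (Hu k Hk) |].
    apply all_true_map_inst, HOk', Hk. }
  destruct (HC0 w) as [x [Hx Hxtrue]]; [apply all_true_map_inst, HO0 |].
  apply (Permutation_in _ Hperm), in_app_or in Hx as [Hx | Hx].
  - exfalso. rewrite map_map in Hx.
    apply in_map_iff in Hx as [k [<- Hk]]. apply in_seq in Hk.
    apply lit_true_dual in Hxtrue. apply Hxtrue, Hl'. lia.
  - exists (inst sigma r0 x). split; [apply in_map, Hx |].
    apply lit_true_inst, Hxtrue.
Qed.

Lemma conflict_holds l1 l2 O1 O2 r1 r2 sigma :
  holds_under_decisions M [l1] O1 ->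
  holds_under_decisions M [dual l2] O2 ->
  inst sigma r1 l1 = inst sigma r2 l2 ->
  holds_under_decisions M [] (map (inst sigma r1) O1 ++ map (inst sigma r2) O2).
Proof.
  intros H1 H2 Hunif v HO. exfalso.
  apply all_true_app in HO as [HO1 HO2].
  apply all_true_map_inst in HO1, HO2.
  pose proof (holds_under_decisions_unit _ _ _ _ H1 HO1) as Hl1.
  pose proof (holds_under_decisions_unit _ _ _ _ H2 HO2) as Hl2.
  apply lit_true_dual in Hl2. apply Hl2, lit_true_inst.
  rewrite <- Hunif. apply lit_true_inst, Hl1.
Qed.

Lemma cdcl_holds O :
  holds_under_decisions M [] O -> holds_under_decisions M (map dual O) [].
Proof.
  intros H v _. apply NNPP. intros Hfalse.
  assert (HO : all_true M v O).
  { intros o Ho. apply NNPP. intros Hno. apply Hfalse.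
    exists (dual o). split; [apply in_map, Ho | apply lit_true_dual, Hno]. }
  destruct (H v HO) as [x [[] _]].
Qed.

Lemma CRder_holds_under_decisions S :
  models M S -> forall c O, CRder S c O -> holds_under_decisions M c O.
Proof.
  intros HM c O D. induction D.
  - intros v _. apply HM. assumption.
  - intros v HO. exists l. split; [left; reflexivity | apply HO; left; reflexivity].
  - eapply unitprop_holds; eassumption.
  - eapply conflict_holds; eassumption.
  - apply cdcl_holds. assumption.
Qed.

End Rules.

Lemma CRproof_entails S c : CRproof S c -> entails S c.
Proof.
  intros [c' [D Hperm]] M HM v.
  destruct (CRder_holds_under_decisions M S HM _ _ D v) as [x [Hx Hxtrue]].
  - intros o [].
  - exists x. split; [apply (Permutation_in _ Hperm), Hx | exact Hxtrue].
Qed.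

Theorem corollary2 :
  (forall (S : clause -> Prop) (c : clause), CRproof S c -> entails S c) /\
  (forall S : clause -> Prop, CRrefutation S -> unsatisfiable S).
Proof.
  split; [exact CRproof_entails |].
  intros S R M HM.
  destruct (CRproof_entails S [] R M HM (fun _ => dom_inhabited M)) as [x [[] _]].
Qed.
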